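(* Assume Assumptions 2. For every $s\in(0,1)$ there exists $\kappa_0<\infty$, depending only on $\|\nu\|_\infty$, $\|\sigma_0\|_\infty$, $\|\sigma_1\|_\infty$, $K$ and $s$, such that for all $\kappa\ge\kappa_0$, $$\sup_{E\in\mathbb R}\|T_{\kappa,E,s}\|<1,$$ where $\|T_{\kappa,E,s}\|$ is the operator norm on $C(\overline{\mathbb C^+})$ with the sup-norm.
   Context: Assumptions 2: $\nu$ has bounded density (also $\nu$) supported in $[-K,K]$, $K<\infty$; $\sigma$ is a probability measure on $\mathbb R^2$ supported in $[-1,1]^2$ whose marginals $\sigma_0,\sigma_1$ have bounded densities (also denoted $\sigma_0,\sigma_1$). Let $\overline{\mathbb C^+}=\mathbb C^+\cup\mathbb R\cup\{i\infty\}$, $C(\overline{\mathbb C^+})$ the continuous complex functions on $\mathbb C^+\cup\mathbb R$ with a finite limit at infinity. For $\kappa\ge0$, $\mu$ is the law of $q=(r+\kappa p_0,r+\kappa p_1)$ with $r\sim\nu$, $(p_0,p_1)\sim\sigma$ independent. For $z\in\mathbb C^+\cup\mathbb R$, $\phi^\pm_{z,q}(w)=\tfrac12\big(\frac{-1}{w+(z-q_0)/\sqrt2}\pm\frac{-1}{w+(z-q_1)/\sqrt2}\big)$, $\phi^\pm_{z,q}(i\infty)=0$, and $(T_{\kappa,z,s}f)(w)=\int f(\phi^+_{z,q}(w))\big(|\phi^+_{z,q}(w)|^s+|\phi^-_{z,q}(w)|^s\big)d\mu(q)$, $(T_{\kappa,z,s}f)(i\infty)=0$. *)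

From HB Require Import structures.
From mathcomp Require Import all_boot all_order all_algebra.
From mathcomp Require Import all_classical all_reals all_analysis.
From mathcomp Require Import complex.

Set Implicit Arguments.
Unset Strict Implicit.
Unset Printing Implicit Defensive.

Import Order.TTheory GRing.Theory Num.Theory.
Local Open Scope classical_set_scope.
Local Open Scope ring_scope.

Section Defs.
Context {R : realType}.
Local Notation C := R[i].

Definition cabs (x : C) : R := Normc.normc x.

(* The closed upper half plane C^+ \cup R (the point i\infty is handled
   separately, through the limit value L of a function at infinity). *)
Definition Hbar : set C := [set w | 0 <= complex.Im w].

Definition shift (z : C) (qj : R) : C := (z - (qj%:C)%C) / ((Num.sqrt 2)%:C)%C.

Definition phi_plus (z : C) (q : R * R) (w : C) : C :=
  ((2^-1)%:C)%C * ((- 1) / (w + shift z q.1) + (- 1) / (w + shift z q.2)).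
Definition phi_minus (z : C) (q : R * R) (w : C) : C :=
  ((2^-1)%:C)%C * ((- 1) / (w + shift z q.1) - (- 1) / (w + shift z q.2)).

(* integrand of T_{kappa,z,s} f (w) as a function of q; on the (mu-null) set
   where one of the denominators vanishes it is set to 0 *)
Definition T_integrand (z : C) (s : R) (f : C -> C) (w : C) (q : R * R) : C :=
  if (w + shift z q.1 == 0) || (w + shift z q.2 == 0) then 0
  else f (phi_plus z q w) *
       ((cabs (phi_plus z q w)) `^ s + (cabs (phi_minus z q w)) `^ s)%:C%C.

(* \int F(q) d mu(q), where mu is the law of q = (r + kappa p0, r + kappa p1),
   r ~ nu (Lebesgue density nu) and (p0,p1) ~ sigma independent;
   complex integral = integral of real part + i integral of imaginary part. *)
Definition law_integral (nu : R -> R) (sigma : probability (R * R)%type R)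
    (kappa : R) (F : R * R -> C) : C :=
  let G r (p : R * R) := F (r + kappa * p.1, r + kappa * p.2) in
  Complex
    (Rintegral lebesgue_measure setT
       (fun r => nu r * Rintegral sigma setT (fun p => complex.Re (G r p))))
    (Rintegral lebesgue_measure setT
       (fun r => nu r * Rintegral sigma setT (fun p => complex.Im (G r p)))).

(* (T_{kappa,z,s} f)(w) for finite w; (T f)(i infty) = 0 *)
Definition T_op (nu : R -> R) (sigma : probability (R * R)%type R)
    (kappa : R) (z : C) (s : R) (f : C -> C) (w : C) : C :=
  law_integral nu sigma kappa (T_integrand z s f w).

(* f (with value L at i infty) belongs to C(\overline{C^+}) : continuous on
   C^+ \cup R, with limit L at infinity. *)
Definition in_Cbar (f : C -> C) (L : C) : Prop :=
  (forall w, Hbar w -> forall e : R, 0 < e -> exists2 d : R, 0 < d &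
     forall w', Hbar w' -> cabs (w' - w) < d -> cabs (f w' - f w) < e) /\
  (forall e : R, 0 < e -> exists M : R,
     forall w, Hbar w -> M < cabs w -> cabs (f w - L) < e).

Definition density_assumptions (nu : R -> R) (Nnu K : R) : Prop :=
  measurable_fun setT nu /\
  (forall x, 0 <= nu x) /\
  (\int[lebesgue_measure]_x (nu x)%:E = 1)%E /\
  (forall x, nu x <= Nnu) /\
  (forall x, K < `|x| -> nu x = 0).

Definition sigma_assumptions (sigma : probability (R * R)%type R)
    (sigma0 sigma1 : R -> R) (N0 N1 : R) : Prop :=
  sigma [set p : R * R | `|p.1| <= 1 /\ `|p.2| <= 1] = 1%E /\
  measurable_fun setT sigma0 /\ measurable_fun setT sigma1 /\
  (forall x, 0 <= sigma0 x <= N0) /\ (forall x, 0 <= sigma1 x <= N1) /\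
  (forall A : set R, measurable A ->
     (sigma (A `*` setT) = \int[lebesgue_measure]_(x in A) (sigma0 x)%:E)%E) /\
  (forall A : set R, measurable A ->
     (sigma (setT `*` A) = \int[lebesgue_measure]_(x in A) (sigma1 x)%:E)%E).

End Defs.

From Pilot Require Import Defs.
From HB Require Import structures.
From mathcomp Require Import all_boot all_order all_algebra.
From mathcomp Require Import all_classical all_reals all_analysis.
From mathcomp Require Import complex.
From mathcomp Require Import ring lra measurable_realfun.
Import Order.TTheory GRing.Theory Num.Theory.
Local Open Scope classical_set_scope.
Local Open Scope ring_scope.

(* Since [phi^+] maps the closed upper half plane into itself and
   [|phi^+|, |phi^-| <= (|w + zeta_0|^-1 + |w + zeta_1|^-1) / 2] with
   [zeta_j = (E - q_j) / sqrt 2], the integrand of [T f] is bounded by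
   [2 |f|_oo (|w + zeta_0|^-s + |w + zeta_1|^-s)].  Taking real parts,
   [sqrt 2 |w + zeta_j| >= kappa |p_j - m|] where [m] depends only on [w], [E]
   and [r].  It therefore suffices to bound [\int (kappa |p - m|)^-s sigma_j(p) dp]
   by [C kappa^-s] uniformly in [m].  Cutting at the dyadic scales
   [|p - m| < 2^-n], the [n]-th layer costs at most [kappa^-s 2^(s (n+1))]
   on a set of [sigma_j]-mass at most [2^(1-n) |sigma_j|_oo]; as [2^s < 2] the
   layers sum to a constant.  Hence [|T| <= C' kappa^-s], which is [< 1] for
   [kappa] large; only the bounds on [sigma_0], [sigma_1] enter [C']. *)

Section integral_bounds.
Context {d} {T : measurableType d} {R : realType} (mu : {measure set T -> \bar R}).
Local Open Scope ereal_scope.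

Lemma ge0_le_integralT (f g : T -> \bar R) : (forall x, 0 <= f x) ->
  (forall x, f x <= g x) -> \int[mu]_x f x <= \int[mu]_x g x.
Proof.
move=> f0 fg.
rewrite (ge0_integralTE mu f0) (ge0_integralTE mu (fun x => le_trans (f0 x) (fg x))).
apply: ereal_sup_le => _ [h hf <-]; exists h => //= x.
exact: le_trans (hf x) (fg x).
Qed.

(* No measurability of [g] is required: [g^\+] and [g^\-] are both compared
   with [H] through the supremum formula for nonnegative integrals. *)
Lemma normr_Rintegral_le (g : T -> R) (H : T -> \bar R) (b : R) :
  (forall x, (`|g x|)%:E <= H x) -> \int[mu]_x H x <= b%:E ->
  (`|Rintegral mu setT g| <= b)%R.
Proof.
move=> gH Hb.
have H0 x : 0 <= H x by exact: le_trans (gH x).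
have P0 : 0 <= \int[mu]_x ((fun x => (g x)%:E)^\+ x).
  by apply: integral_ge0 => x _; exact: funepos_ge0.
have N0 : 0 <= \int[mu]_x ((fun x => (g x)%:E)^\- x).
  by apply: integral_ge0 => x _; exact: funeneg_ge0.
have Pb : \int[mu]_x ((fun x => (g x)%:E)^\+ x) <= b%:E.
  apply: le_trans Hb; apply: ge0_le_integralT => // x; apply: le_trans (gH x).
  by rewrite funeposE /= -EFin_max lee_fin ge_max normr_ge0 ler_norm.
have Nb : \int[mu]_x ((fun x => (g x)%:E)^\- x) <= b%:E.
  apply: le_trans Hb; apply: ge0_le_integralT => // x; apply: le_trans (gH x).
  by rewrite funenegE /= -EFin_max lee_fin ge_max normr_ge0 -normrN ler_norm.
rewrite /Rintegral integralE; move: P0 N0 Pb Nb.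
case: (\int[mu]_x _) => [p| |] //; case: (\int[mu]_x _) => [n| |] //.
rewrite !lee_fin => p0 n0 pb nb /=.
by rewrite ler_norml; apply/andP; split; lra.
Qed.

Lemma normr_Rintegral_density_le (nu h : T -> R) (M : R) : measurable_fun setT nu ->
  (forall x, (0 <= nu x)%R) -> \int[mu]_x (nu x)%:E = 1 -> (0 <= M)%R ->
  (forall x, `|h x| <= M)%R -> (`|Rintegral mu setT (fun x => nu x * h x)| <= M)%R.
Proof.
move=> mnu nu0 nu1 M0 hM.
apply: (normr_Rintegral_le _ (fun x => M%:E * (nu x)%:E)).
  by move=> x; rewrite -EFinM lee_fin normrM ger0_norm // mulrC ler_wpM2r.
rewrite ge0_integralZl_EFin //; first by rewrite nu1 mule1.
- by move=> x _; rewrite lee_fin.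
- exact/measurable_EFinP.
Qed.

End integral_bounds.

Section real_bounds.
Context {R : realType}.

Lemma nneseries_ub (v : nat -> R) (b : R) : (forall k, 0 <= v k) ->
  (forall n, \sum_(0 <= k < n) v k <= b) -> (\sum_(k <oo) (v k)%:E <= b%:E)%E.
Proof.
move=> v0 vb; apply: lime_le.
  by apply: is_cvg_nneseries => n _ _; rewrite lee_fin.
by apply: nearW => n; rewrite sumEFin lee_fin.
Qed.

Lemma geometric_sum_le (rho : R) : 0 <= rho < 1 ->
  forall n, \sum_(0 <= k < n) rho ^+ k <= (1 - rho)^-1.
Proof.
move=> /andP[r0 r1] n.
have E : (\sum_(0 <= k < n) rho ^+ k) * (1 - rho) = 1 - rho ^+ n.
  elim: n => [|n IH]; first by rewrite big_geq // mul0r expr0 subrr.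
  by rewrite big_nat_recr //= mulrDl IH exprS; ring.
have h : 0 < 1 - rho by lra.
rewrite -[X in X <= _](mulfK (lt0r_neq0 h)) E -[X in _ <= X]mul1r.
by rewrite ler_pM2r ?invr_gt0 // lerBlDr lerDl exprn_ge0.
Qed.

Lemma sum_eq0_le1 (M : nat) : \sum_(0 <= n < M) (n == 0)%:R <= (1 : R).
Proof.
elim: M => [|M IH]; first by rewrite big_geq.
rewrite big_nat_recr //=; case: M IH => [|M] IH; first by rewrite big_geq // add0r.
by rewrite addr0.
Qed.

Lemma powR_exprn (x s : R) (n : nat) : 0 <= x -> (x ^+ n) `^ s = (x `^ s) ^+ n.
Proof.
by move=> x0; rewrite -powR_mulrn // powRAC powR_mulrn // powR_ge0.
Qed.

Lemma powRV (x s : R) : 0 <= x -> (x^-1) `^ s = (x `^ s)^-1.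
Proof.
move=> x0; rewrite -powR_inv1 // -powRrM mulrC powRrM powR_inv1 //.
exact: powR_ge0.
Qed.

Lemma powR2_lt2 (s : R) : s < 1 -> 2 `^ s < 2.
Proof.
move=> s1; rewrite /powR pnatr_eq0 /= -[X in _ < X]lnK ?posrE //.
by rewrite ltr_expR gtr_pMl // ln_gt0 // ltr1n.
Qed.

Lemma powR_inv_eventually_le (s a : R) : 0 < s -> 0 < a ->
  exists2 k0 : R, 0 < k0 & forall k, k0 <= k -> (k^-1) `^ s <= a.
Proof.
move=> s0 a0; set k0 := (a^-1) `^ (s^-1).
have k00 : 0 < k0 by rewrite powR_gt0 ?invr_gt0.
exists k0 => // k k0k; have k0' : 0 < k by exact: lt_le_trans k0k.
have ai : 0 <= a^-1 by rewrite invr_ge0 ltW.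
have k0s : a^-1 <= k `^ s.
  rewrite -[X in X <= _](powRr1 ai) -(mulVf (lt0r_neq0 s0)) powRrM.
  by apply: ge0_ler_powR; rewrite ?nnegrE ?powR_ge0 ?(ltW s0) ?(ltW k0').
by rewrite powRV ?(ltW k0') // -[X in _ <= X]invrK lef_pV2 ?posrE ?powR_gt0 ?invr_gt0.
Qed.

Lemma dyadic_bracket {t : R} : 0 < t -> t < 1 ->
  exists n, (2^-1) ^+ n.+1 <= t < (2^-1) ^+ n.
Proof.
move=> t0 t1.
have ex : exists n, (fun n => (2^-1) ^+ n <= t) n.
  have ti : 0 <= t^-1 by rewrite invr_ge0 ltW.
  exists (Num.Def.archi_bound t^-1) => /=.
  set n := Num.Def.archi_bound _.
  have h1 := archi_boundP ti.
  have h2 : (n%:R : R) < 2 ^+ n.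
    by rewrite -natrX ltr_nat ltn_expl.
  rewrite exprVn -[X in _ <= X](invrK t) lef_pV2 ?posrE ?invr_gt0 ?exprn_gt0 //.
  lra.
have [k hk kmin] := ex_minnP ex.
case: k hk kmin => [|n] hk kmin; first by move: hk; rewrite expr0; lra.
by exists n; rewrite hk /= ltNge; apply/negP => /kmin; rewrite ltnn.
Qed.

(* The witness is [n = 0] if [u >= k], and the dyadic scale of [u / k] otherwise. *)
Lemma powR_inv_le_dyadic_term (s k u z : R) : 0 <= s -> 0 < k -> 0 < u ->
  k * z <= u -> exists n, (u^-1) `^ s <= (k^-1) `^ s * (n == 0)%:R
     + (k^-1) `^ s * (2 `^ s) ^+ n.+1 * (z < (2^-1) ^+ n)%R%:R.
Proof.
move=> s0 k0 u0 kzu.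
have c0 : 0 <= (k^-1) `^ s by exact: powR_ge0.
have w0 n : 0 <= (k^-1) `^ s * (2 `^ s) ^+ n.+1 * (z < (2^-1) ^+ n)%R%:R.
  by rewrite !mulr_ge0 // exprn_ge0 // powR_ge0.
have [ku|uk] := leP k u.
  exists 0%N; rewrite eqxx mulr1 -[X in X <= _]addr0 lerD //.
  apply: ge0_ler_powR; rewrite ?nnegrE ?invr_ge0 ?(ltW k0) ?(ltW u0) //.
  by rewrite lef_pV2 ?posrE.
have uk1 : u / k < 1 by rewrite ltr_pdivrMr // mul1r.
have [n /andP[h1 h2]] := dyadic_bracket (divr_gt0 u0 k0) uk1.
exists n.
have -> : z < (2^-1) ^+ n by apply: le_lt_trans h2; rewrite ler_pdivlMr // mulrC.
rewrite mulr1 -[X in X <= _]add0r; apply: lerD; first by rewrite mulr_ge0.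
have -> : (k^-1) `^ s * (2 `^ s) ^+ n.+1 = (k^-1 * 2 ^+ n.+1) `^ s.
  by rewrite powRM ?invr_ge0 ?exprn_ge0 ?powR_exprn // ltW.
apply: ge0_ler_powR; rewrite // ?nnegrE ?mulr_ge0 ?invr_ge0 ?exprn_ge0 ?(ltW k0) ?(ltW u0) //.
have -> : u^-1 = k^-1 * (u / k)^-1.
  by rewrite invf_div mulrA mulVf ?mul1r // lt0r_neq0.
rewrite ler_wpM2l ?invr_ge0 ?(ltW k0) //.
move: h1; rewrite exprVn -[X in _ <= X](invrK (u / k)) lef_pV2 //.
  by rewrite posrE exprn_gt0.
by rewrite posrE invr_gt0 divr_gt0.
Qed.

End real_bounds.

Section complex_bounds.
Context {R : realType}.
Local Notation C := R[i].

Lemma cabs_ge0 (x : C) : 0 <= cabs x.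
Proof. by case: x => a b; rewrite /cabs /=; exact: sqrtr_ge0. Qed.

Lemma cabs_gt0 (x : C) : x != 0 -> 0 < cabs x.
Proof.
move=> x0; rewrite lt_neqAle cabs_ge0 andbT eq_sym.
by apply: contra x0 => /eqP/Normc.eq0_normc ->.
Qed.

Lemma cabs_real (a : R) : cabs a%:C%C = `|a|.
Proof. by rewrite /cabs /= expr0n /= addr0 sqrtr_sqr. Qed.

Lemma cabsM (x y : C) : cabs (x * y) = cabs x * cabs y.
Proof. exact: Normc.normcM. Qed.

Lemma cabsV (x : C) : cabs x^-1 = (cabs x)^-1.
Proof. exact: Normc.normcV. Qed.

Lemma cabsN (x : C) : cabs (- x) = cabs x.
Proof. by case: x => a b; rewrite /cabs /= !sqrrN. Qed.

Lemma cabsD (x y : C) : cabs (x + y) <= cabs x + cabs y.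
Proof. exact: le_normcD. Qed.

Lemma cabs_Re (x : C) : `|complex.Re x| <= cabs x.
Proof.
case: x => a b; rewrite /cabs /= -sqrtr_sqr.
by rewrite ler_sqrt ?lerDl ?sqr_ge0 // addr_ge0 // sqr_ge0.
Qed.

Lemma cabs_Im (x : C) : `|complex.Im x| <= cabs x.
Proof.
case: x => a b; rewrite /cabs /= -sqrtr_sqr.
by rewrite ler_sqrt ?lerDr ?sqr_ge0 // addr_ge0 // sqr_ge0.
Qed.

Lemma cabs_Complex (u v : R) : cabs (Complex u v) <= `|u| + `|v|.
Proof.
have -> : Complex u v = u%:C%C + v%:C%C * 'i%C.
  by apply/eqP; rewrite eq_complex /= !mulr0 !mul0r !mulr1 !subr0 !addr0 !add0r !eqxx.
apply: le_trans (cabsD _ _) _; rewrite cabsM !cabs_real.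
by rewrite /cabs /= expr0n expr1n /= add0r sqrtr1 mulr1.
Qed.

Lemma cabs_Nrcp (x : C) : cabs ((-1) / x) = (cabs x)^-1.
Proof.
have c1 : cabs (1 : C) = 1 by rewrite /cabs /= expr1n expr0n /= addr0 sqrtr1.
by rewrite cabsM cabsV cabsN c1 mul1r.
Qed.

Lemma Im_Nrcp_ge0 (x : C) : 0 <= complex.Im x -> 0 <= complex.Im ((-1) / x).
Proof.
case: x => a b /= hb.
by rewrite mulN1r opprK oppr0 mul0r addr0 divr_ge0 // addr_ge0 // sqr_ge0.
Qed.

Lemma shift_real (E t : R) : Defs.shift E%:C%C t = ((E - t) / Num.sqrt 2)%:C%C.
Proof. by rewrite /Defs.shift rmorphM rmorphB fmorphV. Qed.

Lemma Hbar_phi_plus (E : R) (q : R * R) (w : C) : Hbar w ->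
  Hbar (phi_plus E%:C%C q w).
Proof.
have Im_realM (c : R) (x : C) : complex.Im (c%:C%C * x) = c * complex.Im x.
  by case: x => a b /=; rewrite mul0r addr0.
have ImD (x y : C) : complex.Im (x + y) = complex.Im x + complex.Im y.
  by case: x; case: y.
have Im_real (a : R) : complex.Im a%:C%C = 0 by [].
rewrite /Hbar /phi_plus !shift_real /= => hw.
by rewrite Im_realM ImD mulr_ge0 ?invr_ge0 // addr_ge0 // Im_Nrcp_ge0 // ImD Im_real addr0.
Qed.

Lemma cabs_phi_plus_le (z : C) (q : R * R) (w : C) : cabs (phi_plus z q w) <=
  ((cabs (w + Defs.shift z q.1))^-1 + (cabs (w + Defs.shift z q.2))^-1) / 2.
Proof.
rewrite /phi_plus cabsM cabs_real ger0_norm ?invr_ge0 // mulrC.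
by rewrite ler_pM2r ?invr_gt0 // -!cabs_Nrcp cabsD.
Qed.

Lemma cabs_phi_minus_le (z : C) (q : R * R) (w : C) : cabs (phi_minus z q w) <=
  ((cabs (w + Defs.shift z q.1))^-1 + (cabs (w + Defs.shift z q.2))^-1) / 2.
Proof.
rewrite /phi_minus cabsM cabs_real ger0_norm ?invr_ge0 // mulrC.
by rewrite ler_pM2r ?invr_gt0 // -!cabs_Nrcp -[X in _ <= _ + X]cabsN cabsD.
Qed.

Lemma powR_le_addr_of_le_mid (s a b c : R) : 0 <= s -> 0 <= a -> 0 <= b -> 0 <= c ->
  c <= (a + b) / 2 -> c `^ s <= a `^ s + b `^ s.
Proof.
move=> s0 a0 b0 c0 cab.
have [ab|ba] := leP a b.
  apply: le_trans (_ : b `^ s <= _); last by rewrite lerDr powR_ge0.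
  by apply: ge0_ler_powR; rewrite ?nnegrE //; lra.
apply: le_trans (_ : a `^ s <= _); last by rewrite lerDl powR_ge0.
by apply: ge0_ler_powR; rewrite ?nnegrE //; lra.
Qed.

Lemma T_integrand_bound (E s B : R) (f : C -> C) (w : C) (q : R * R) :
  0 <= s -> 0 <= B -> (forall w, Hbar w -> cabs (f w) <= B) -> Hbar w ->
  T_integrand E%:C%C s f w q = 0 \/
  [/\ w + Defs.shift E%:C%C q.1 != 0, w + Defs.shift E%:C%C q.2 != 0 &
   cabs (T_integrand E%:C%C s f w q) <=
     2 * B * (((cabs (w + Defs.shift E%:C%C q.1))^-1) `^ s +
              ((cabs (w + Defs.shift E%:C%C q.2))^-1) `^ s)].
Proof.
move=> s0 B0 fB hw; rewrite /T_integrand.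
case: ifP => [_|/negbT]; first by left.
rewrite negb_or => /andP[h1 h2]; right; split => //.
set a := (cabs _)^-1; set b := (cabs _)^-1.
have a0 : 0 <= a by rewrite invr_ge0 cabs_ge0.
have b0 : 0 <= b by rewrite invr_ge0 cabs_ge0.
rewrite cabsM cabs_real ger0_norm; last by rewrite addr_ge0 ?powR_ge0.
rewrite [2 * B]mulrC -mulrA; apply: ler_pM; rewrite ?cabs_ge0 ?addr_ge0 ?powR_ge0 //.
  by apply: fB; exact: Hbar_phi_plus.
rewrite mulr2n mulrDl mul1r; apply: lerD; apply: powR_le_addr_of_le_mid;
  rewrite ?cabs_ge0 //.
  exact: cabs_phi_plus_le.
exact: cabs_phi_minus_le.
Qed.

Lemma normr_Re_shift_le (E t : R) (w : C) :
  `|Num.sqrt 2 * complex.Re w + E - t| <= Num.sqrt 2 * cabs (w + Defs.shift E%:C%C t).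
Proof.
have s2 : 0 < Num.sqrt (2 : R) by rewrite sqrtr_gt0.
have := cabs_Re (w + Defs.shift E%:C%C t); rewrite shift_real.
have -> : complex.Re (w + ((E - t) / Num.sqrt 2)%:C%C) = complex.Re w + (E - t) / Num.sqrt 2.
  by case: w.
have -> : Num.sqrt 2 * complex.Re w + E - t = Num.sqrt 2 * (complex.Re w + (E - t) / Num.sqrt 2).
  by rewrite mulrDr mulrCA mulfV ?mulr1 ?addrA // gt_eqF.
by rewrite normrM ger0_norm ?ler_pM2l // ltW.
Qed.

Lemma powR_inv_cabs_le (s : R) (x : C) : 0 <= s <= 1 ->
  ((cabs x)^-1) `^ s <= 2 * ((Num.sqrt 2 * cabs x)^-1) `^ s.
Proof.
move=> /andP[s0 s1].
have s2 : 0 < Num.sqrt (2 : R) by rewrite sqrtr_gt0.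
rewrite invfM powRM ?invr_ge0 ?cabs_ge0 ?sqrtr_ge0 // mulrA ler_peMl ?powR_ge0 //.
have sqrt2_ge1 : 1 <= Num.sqrt (2 : R).
  have : Num.sqrt (1 : R) <= Num.sqrt 2 by rewrite ler_sqrt //; lra.
  by rewrite sqrtr1.
have sqrt2_le2 : Num.sqrt (2 : R) <= 2.
  have : Num.sqrt (2 : R) <= Num.sqrt (2 ^+ 2) by rewrite ler_sqrt ?expr2 //; lra.
  by rewrite sqrtr_sqr ger0_norm.
apply: le_trans (_ : 2 * (Num.sqrt 2)^-1 <= _).
  by rewrite ler_pdivlMr // mul1r.
by rewrite ler_pM2l // ger1_powR // invr_gt0 s2 invf_le1.
Qed.

End complex_bounds.

Section dyadic_majorant.
Context {R : realType}.

Definition dyadic_itv (m : R) (n : nat) : set R :=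
  `](m - (2^-1) ^+ n), (m + (2^-1) ^+ n)[%classic.

(* Summed over [n], these majorize [(k |x - m|)^-s]. *)
Definition dyadic_majorant (s k m : R) (n : nat) (x : R) : R :=
  (k^-1) `^ s * (n == 0)%:R + (k^-1) `^ s * (2 `^ s) ^+ n.+1 * \1_(dyadic_itv m n) x.

Lemma measurable_dyadic_itv (m : R) (n : nat) : measurable (dyadic_itv m n).
Proof. exact: measurable_itv. Qed.

Lemma dyadic_majorant_ge0 (s k m : R) (n : nat) (x : R) : 0 <= dyadic_majorant s k m n x.
Proof. by rewrite /dyadic_majorant addr_ge0 // !mulr_ge0 ?powR_ge0 ?exprn_ge0. Qed.

Lemma indic_dyadic_itv (m x : R) (n : nat) :
  \1_(dyadic_itv m n) x = (`|x - m| < (2^-1) ^+ n)%R%:R :> R.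
Proof.
rewrite /indic /dyadic_itv; congr (_%:R); congr (nat_of_bool _).
by rewrite mem_setE in_itv /= distrC ltr_distlC.
Qed.

Lemma powR_inv_le_dyadic_series (s k u m x : R) : 0 <= s -> 0 < k -> 0 < u ->
  k * `|x - m| <= u ->
  (((u^-1) `^ s)%:E <= \sum_(n <oo) (dyadic_majorant s k m n x)%:E)%E.
Proof.
move=> s0 k0 u0 h; have [n hn] := powR_inv_le_dyadic_term _ _ _ _ s0 k0 u0 h.
apply: (@le_trans _ _ (dyadic_majorant s k m n x)%:E).
  by rewrite lee_fin /dyadic_majorant indic_dyadic_itv.
apply: le_trans (nneseries_lim_ge n.+1 _); last first.
  by move=> *; rewrite lee_fin dyadic_majorant_ge0.
rewrite big_nat_recr //= leeDr //.
by apply: sume_ge0 => *; rewrite lee_fin dyadic_majorant_ge0.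
Qed.

Lemma integral_dyadic_itv_le (g : R -> R) (N m : R) (n : nat) :
  measurable_fun setT g -> (forall x, 0 <= g x <= N) ->
  (\int[lebesgue_measure]_(x in dyadic_itv m n) (g x)%:E <= (N * (2 * (2^-1) ^+ n))%:E)%E.
Proof.
move=> mg gN.
apply: le_trans (@ge0_le_integral _ _ _ lebesgue_measure _ (measurable_dyadic_itv m n)
  _ (fun=> N%:E) _ _ _ _) _.
- by move=> x _; rewrite lee_fin; case/andP: (gN x).
- by apply/measurable_EFinP; exact: measurable_funTS.
- exact: measurable_cst.
- by move=> x _; rewrite lee_fin; case/andP: (gN x).
rewrite integral_cst; last exact: measurable_dyadic_itv.
have L := @lebesgue_measure_itv R `](m - (2^-1) ^+ n), (m + (2^-1) ^+ n)[.
have lt : m - (2^-1) ^+ n < m + (2^-1) ^+ n by rewrite ltrD2l gtrN // exprn_gt0.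
rewrite /= lte_fin lt -EFinD in L.
have E2 : lebesgue_measure (dyadic_itv m n) = (2 * (2^-1) ^+ n)%:E.
  by apply: eq_trans L _; congr (_%:E); ring.
apply: (@le_trans _ _ (N%:E * (2 * (2^-1) ^+ n)%:E)%E); last by rewrite -EFinM.
by rewrite le_eqVlt; apply/orP; left; apply/eqP; congr (_ * _)%E; exact: E2.
Qed.

End dyadic_majorant.

Section dyadic_layers.
Context {R : realType}.
Local Notation C := R[i].

Definition dyadic_layer (B s k m : R) (n : nat) (p : R * R) : R :=
  4 * B * (dyadic_majorant s k m n p.1 + dyadic_majorant s k m n p.2).

Lemma indic_fst (A : set R) (p : R * R) : \1_A p.1 = \1_(A `*` setT) p :> R.
Proof.
rewrite /indic; congr (_%:R); congr (nat_of_bool _).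
by apply/idP/idP => [/set_mem h|/set_mem [h _]]; apply: mem_set.
Qed.

Lemma indic_snd (A : set R) (p : R * R) : \1_A p.2 = \1_(setT `*` A) p :> R.
Proof.
rewrite /indic; congr (_%:R); congr (nat_of_bool _).
by apply/idP/idP => [/set_mem h|/set_mem [_ h]]; apply: mem_set.
Qed.

Lemma dyadic_layerE (B s k m : R) (n : nat) (p : R * R) :
  (dyadic_layer B s k m n p)%:E =
  ((4 * B)%:E * ((2 * (k^-1) `^ s * (n == 0)%:R)%:E +
    ((k^-1) `^ s * (2 `^ s) ^+ n.+1)%:E *
    ((\1_(dyadic_itv m n `*` setT) p)%:E + (\1_(setT `*` dyadic_itv m n) p)%:E)))%E.
Proof.
rewrite /dyadic_layer /dyadic_majorant indic_fst indic_snd -!EFinD -!EFinM.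
by congr (_%:E); ring.
Qed.

Lemma dyadic_layer_ge0 (B s k m : R) (n : nat) (p : R * R) : 0 <= B ->
  0 <= dyadic_layer B s k m n p.
Proof. by move=> B0; rewrite /dyadic_layer !mulr_ge0 // addr_ge0 // dyadic_majorant_ge0. Qed.

Lemma measurable_dyadic_layer (B s k m : R) (n : nat) :
  measurable_fun setT (fun p : R * R => (dyadic_layer B s k m n p)%:E).
Proof.
rewrite (funext (dyadic_layerE B s k m n)).
have mI (A : set (R * R)) : measurable A ->
    measurable_fun setT (fun p => (\1_A p)%:E : \bar R).
  by move=> mA; apply/measurable_EFinP; exact: measurable_indic.
apply: measurable_funeM; apply: emeasurable_funD; first exact: measurable_cst.
apply: measurable_funeM.
by apply: emeasurable_funD; apply: mI; apply: measurableX => //; exact: measurable_dyadic_itv.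
Qed.

Lemma nneseries_dyadic_layer (B s k m : R) (p : R * R) : 0 <= B ->
  (\sum_(n <oo) (dyadic_layer B s k m n p)%:E =
   (4 * B)%:E * (\sum_(n <oo) (dyadic_majorant s k m n p.1)%:E +
                 \sum_(n <oo) (dyadic_majorant s k m n p.2)%:E))%E.
Proof.
move=> B0; rewrite -nneseriesD; try by move=> *; rewrite lee_fin dyadic_majorant_ge0.
rewrite -nneseriesZl; last by move=> *; rewrite adde_ge0 // lee_fin dyadic_majorant_ge0.
by apply: congr_lim; apply: funext => N; apply: eq_bigr => i _; rewrite EFinM EFinD.
Qed.

Lemma cabs_T_integrand_le_dyadic_layers (E s B k r : R) (f : C -> C) (w : C) (p : R * R) :
  0 < s < 1 -> 0 < k -> 0 <= B -> (forall w, Hbar w -> cabs (f w) <= B) -> Hbar w ->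
  ((cabs (T_integrand E%:C%C s f w (r + k * p.1, r + k * p.2)))%:E <=
   \sum_(n <oo) (dyadic_layer B s k ((Num.sqrt 2 * complex.Re w + E - r) / k) n p)%:E)%E.
Proof.
move=> /andP[s0 s1] k0 B0 fB hw.
set m := (_ / k).
have [->|[h1 h2 hb]] := T_integrand_bound E s B f w (r + k * p.1, r + k * p.2) (ltW s0) B0 fB hw.
  rewrite /cabs Normc.normc0; apply: nneseries_ge0 => n _ _.
  by rewrite lee_fin dyadic_layer_ge0.
have maj j : w + Defs.shift E%:C%C (r + k * j) != 0 ->
    ((((cabs (w + Defs.shift E%:C%C (r + k * j)))^-1) `^ s)%:E <=
     2%:E * \sum_(n <oo) (dyadic_majorant s k m n j)%:E)%E.
  move=> x0; set x := w + _.
  have kjm : k * `|j - m| <= Num.sqrt 2 * cabs x.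
    have -> : k * `|j - m| = `|Num.sqrt 2 * complex.Re w + E - (r + k * j)|.
      rewrite -{1}[k]ger0_norm ?ltW // -normrM distrC; congr `|_|.
      by rewrite /m; field; rewrite gt_eqF.
    exact: normr_Re_shift_le.
  apply: (@le_trans _ _ (2 * ((Num.sqrt 2 * cabs x)^-1) `^ s)%:E).
    by rewrite lee_fin powR_inv_cabs_le // (ltW s0) (ltW s1).
  rewrite EFinM lee_wpmul2l ?lee_fin //.
  by apply: powR_inv_le_dyadic_series; rewrite ?(ltW s0) ?mulr_gt0 ?sqrtr_gt0 ?cabs_gt0.
rewrite nneseries_dyadic_layer //.
move: hb => /=; set a := _ `^ s; set b := _ `^ s => hb.
apply: (@le_trans _ _ ((2 * B)%:E * (a%:E + b%:E))%E); first by rewrite -EFinD -EFinM lee_fin.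
have -> : (4 * B)%:E = ((2 * B)%:E * 2%:E)%E by rewrite -EFinM; congr (_%:E); ring.
rewrite -muleA; apply: lee_wpmul2l; first by rewrite lee_fin mulr_ge0.
rewrite ge0_muleDr; first by apply: leeD; apply: maj.
  by apply: nneseries_ge0 => *; rewrite lee_fin dyadic_majorant_ge0.
by apply: nneseries_ge0 => *; rewrite lee_fin dyadic_majorant_ge0.
Qed.

Definition dyadic_constant (s N : R) : R := 4 * (2 + 2 * N * 2 `^ s / (1 - 2 `^ s / 2)).

Lemma dyadic_constant_ge0 (s N : R) : s < 1 -> 0 <= N -> 0 <= dyadic_constant s N.
Proof.
move=> s1 N0; rewrite /dyadic_constant !(mulr_ge0, addr_ge0, powR_ge0) //.
by rewrite invr_ge0 subr_ge0 ler_pdivrMr // mul1r ltW // powR2_lt2.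
Qed.

Lemma nneseries_dyadic_bound_le (B s k N : R) : 0 <= B -> 0 <= N -> s < 1 ->
  (\sum_(n <oo) (4 * B * (2 * (k^-1) `^ s * (n == 0)%:R + (k^-1) `^ s * (2 `^ s) ^+ n.+1 *
      (N * (2 * (2^-1) ^+ n))))%:E <= (B * (k^-1) `^ s * dyadic_constant s N)%:E)%E.
Proof.
move=> B0 N0 s1.
have c0 : 0 <= (k^-1) `^ s by exact: powR_ge0.
set rho := 2 `^ s / 2 : R.
have r0 : 0 <= rho by rewrite divr_ge0 ?powR_ge0.
have r1 : rho < 1 by rewrite /rho ltr_pdivrMr // mul1r powR2_lt2.
apply: nneseries_ub => [n|M].
  by rewrite !(mulr_ge0, addr_ge0, exprn_ge0, powR_ge0) // invr_ge0.
set a := 8 * B * (k^-1) `^ s.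
set b := 8 * B * (k^-1) `^ s * N * 2 `^ s.
have -> : \sum_(0 <= n < M) 4 * B * (2 * (k^-1) `^ s * (n == 0)%:R + (k^-1) `^ s *
      (2 `^ s) ^+ n.+1 * (N * (2 * (2^-1) ^+ n))) =
    a * \sum_(0 <= n < M) (n == 0)%:R + b * \sum_(0 <= n < M) rho ^+ n.
  rewrite !big_distrr -big_split /=; apply: eq_bigr => n _.
  by rewrite /a /b /rho exprMn exprS; ring.
apply: (@le_trans _ _ (a * 1 + b * (1 - rho)^-1)).
  apply: lerD; apply: ler_wpM2l.
  - by rewrite /a !mulr_ge0.
  - exact: sum_eq0_le1.
  - by rewrite /b !mulr_ge0 ?powR_ge0.
  - by apply: geometric_sum_le; rewrite r0 r1.
rewrite le_eqVlt; apply/orP; left; apply/eqP; rewrite /a /b /dyadic_constant -/rho.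
by field; rewrite subr_eq0 eq_sym lt_eqF.
Qed.

End dyadic_layers.

Section marginal_bounds.
Context {R : realType}.
Local Notation C := R[i].
Context {sigma : probability (R * R)%type R} {sigma0 sigma1 : R -> R} {N0 N1 : R}.
Hypotheses (msigma0 : measurable_fun setT sigma0) (msigma1 : measurable_fun setT sigma1).
Hypotheses (sigma0_bound : forall x, 0 <= sigma0 x <= N0)
           (sigma1_bound : forall x, 0 <= sigma1 x <= N1).
Hypothesis sigma_fst : forall A : set R, measurable A ->
  (sigma (A `*` setT) = \int[lebesgue_measure]_(x in A) (sigma0 x)%:E)%E.
Hypothesis sigma_snd : forall A : set R, measurable A ->
  (sigma (setT `*` A) = \int[lebesgue_measure]_(x in A) (sigma1 x)%:E)%E.

Lemma sigma_dyadic_strip_fst_le (m : R) (n : nat) :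
  (sigma (dyadic_itv m n `*` setT) <= (N0 * (2 * (2^-1) ^+ n))%:E)%E.
Proof.
by rewrite sigma_fst; [exact: integral_dyadic_itv_le | exact: measurable_dyadic_itv].
Qed.

Lemma sigma_dyadic_strip_snd_le (m : R) (n : nat) :
  (sigma (setT `*` dyadic_itv m n) <= (N1 * (2 * (2^-1) ^+ n))%:E)%E.
Proof.
by rewrite sigma_snd; [exact: integral_dyadic_itv_le | exact: measurable_dyadic_itv].
Qed.

Lemma integral_dyadic_layer_le (B s k m : R) (n : nat) : 0 <= B ->
  (\int[sigma]_p (dyadic_layer B s k m n p)%:E <=
   (4 * B * (2 * (k^-1) `^ s * (n == 0)%:R + (k^-1) `^ s * (2 `^ s) ^+ n.+1 *
      ((N0 + N1) * (2 * (2^-1) ^+ n))))%:E)%E.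
Proof.
move=> B0; rewrite (funext (dyadic_layerE B s k m n)).
set c := 2 * (k^-1) `^ s * (n == 0)%:R.
set W := (k^-1) `^ s * (2 `^ s) ^+ n.+1.
set A1 := dyadic_itv m n `*` [set: R].
set A2 := [set: R] `*` dyadic_itv m n.
have c0 : 0 <= c by rewrite /c !mulr_ge0 ?powR_ge0.
have W0 : 0 <= W by rewrite /W !mulr_ge0 ?powR_ge0 ?exprn_ge0 ?powR_ge0.
have mI (A : set (R * R)) : measurable A ->
    measurable_fun setT (fun p => (\1_A p)%:E : \bar R).
  by move=> mA; apply/measurable_EFinP; exact: measurable_indic.
have mA1 : measurable A1 by apply: measurableX => //; exact: measurable_dyadic_itv.
have mA2 : measurable A2 by apply: measurableX => //; exact: measurable_dyadic_itv.
have I0 p : (0 <= (\1_A1 p)%:E + (\1_A2 p)%:E :> \bar R)%E.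
  by rewrite -EFinD lee_fin addr_ge0.
have WI0 p : (0 <= W%:E * ((\1_A1 p)%:E + (\1_A2 p)%:E) :> \bar R)%E.
  by apply: mule_ge0 => //; rewrite lee_fin.
have mIs : measurable_fun setT (fun p => ((\1_A1 p)%:E + (\1_A2 p)%:E) : \bar R)%E.
  by apply: emeasurable_funD; apply: mI.
rewrite ge0_integralZl_EFin ?mulr_ge0 //; last 2 first.
- by move=> p _; apply: adde_ge0 (WI0 p); rewrite lee_fin.
- by apply: emeasurable_funD; [exact: measurable_cst | exact: measurable_funeM].
rewrite ge0_integralD //; last first.
  by apply: measurable_funeM.
rewrite ge0_integralZl_EFin // ge0_integralD //; try by [move=> p _; rewrite lee_fin | exact: mI].
have -> : (\int[sigma]_p c%:E = c%:E)%E.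
  rewrite integral_cst // -[X in _ = X]mule1; congr (_ * _)%E; exact: probability_setT.
rewrite !integral_indic // !setIT.
apply: (@le_trans _ _ ((4 * B)%:E * (c%:E + W%:E *
    ((N0 * (2 * (2^-1) ^+ n))%:E + (N1 * (2 * (2^-1) ^+ n))%:E)))%E).
  apply: lee_wpmul2l; first by rewrite lee_fin mulr_ge0.
  apply: leeD2l; apply: lee_wpmul2l; rewrite ?lee_fin //.
  by apply: leeD; [exact: sigma_dyadic_strip_fst_le | exact: sigma_dyadic_strip_snd_le].
by rewrite -!EFinD -!EFinM lee_fin le_eqVlt; apply/orP; left; apply/eqP; ring.
Qed.

Let N01_ge0 : 0 <= N0 + N1.
Proof.
case/andP: (sigma0_bound 0) => /le_trans h0 /h0 ?.
by case/andP: (sigma1_bound 0) => /le_trans h1 /h1 ?; exact: addr_ge0.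
Qed.

Lemma normr_Rintegral_T_integrand_le (B s k E r : R) (f : C -> C) (w : C) (comp : C -> R) :
  0 < s < 1 -> 0 < k -> 0 <= B -> (forall w, Hbar w -> cabs (f w) <= B) -> Hbar w ->
  (forall z, `|comp z| <= cabs z) ->
  `|Rintegral sigma setT (fun p => comp (T_integrand E%:C%C s f w (r + k * p.1, r + k * p.2)))|
    <= B * (k^-1) `^ s * dyadic_constant s (N0 + N1).
Proof.
move=> hs k0 B0 fB hw hcomp.
set m := (Num.sqrt 2 * complex.Re w + E - r) / k.
apply: (normr_Rintegral_le sigma _ (fun p => \sum_(n <oo) (dyadic_layer B s k m n p)%:E)%E).
  move=> p; apply: (le_trans _ (cabs_T_integrand_le_dyadic_layers _ _ _ _ r _ _ p hs k0 B0 fB hw)).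
  by rewrite lee_fin hcomp.
rewrite integral_nneseries //; first last.
- by move=> n p _; rewrite lee_fin dyadic_layer_ge0.
- by move=> n; exact: measurable_dyadic_layer.
case/andP: hs => _ s1.
apply: (le_trans _ (nneseries_dyadic_bound_le _ _ k _ B0 N01_ge0 s1)).
apply: lee_nneseries => [n _ _|n _].
  by apply: integral_ge0 => p _; rewrite lee_fin dyadic_layer_ge0.
exact: integral_dyadic_layer_le.
Qed.

Lemma cabs_T_op_le (nu : R -> R) (s kappa E B : R) (f : C -> C) (w : C) :
  measurable_fun setT nu -> (forall x, 0 <= nu x) ->
  (\int[lebesgue_measure]_x (nu x)%:E = 1)%E ->
  0 < s < 1 -> 0 < kappa -> 0 <= B -> (forall w, Hbar w -> cabs (f w) <= B) -> Hbar w ->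
  cabs (T_op nu sigma kappa E%:C%C s f w) <=
    2 * dyadic_constant s (N0 + N1) * (kappa^-1) `^ s * B.
Proof.
move=> mnu nu0 nu1 hs k0 B0 fB hw.
set M := B * (kappa^-1) `^ s * dyadic_constant s (N0 + N1).
have M0 : 0 <= M.
  case/andP: hs => _ s1.
  by rewrite /M mulr_ge0 ?dyadic_constant_ge0 // mulr_ge0 ?powR_ge0.
rewrite (_ : _ * B = M + M); last by rewrite /M; ring.
rewrite /T_op /law_integral; apply: le_trans (cabs_Complex _ _) _.
by apply: lerD; apply: normr_Rintegral_density_le => // r;
  apply: normr_Rintegral_T_integrand_le => //; [exact: cabs_Re | exact: cabs_Im].
Qed.

End marginal_bounds.

Theorem lemma6p1 (R : realType) (s : R) (hs : 0 < s < 1)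
    (Nnu N0 N1 K : R) :
  exists kappa0 : R,
  forall (nu : R -> R) (sigma : probability (R * R)%type R)
         (sigma0 sigma1 : R -> R),
    density_assumptions nu Nnu K ->
    sigma_assumptions sigma sigma0 sigma1 N0 N1 ->
    forall kappa : R, 0 <= kappa -> kappa0 <= kappa ->
    exists2 c : R, c < 1 &
      forall (E : R) (f : R[i] -> R[i]) (L : R[i]) (B : R),
        in_Cbar f L ->
        (forall w, Hbar w -> cabs (f w) <= B) -> cabs L <= B ->
        forall w, Hbar w -> cabs (T_op nu sigma kappa (E%:C)%C s f w) <= c * B.
Proof.
have [s0 s1] : 0 < s /\ s < 1 by apply/andP.
set Q := dyadic_constant s (N0 + N1).
have a0 : 0 < (2 * `|Q| + 2)^-1 by rewrite invr_gt0 ltr_wpDl ?mulr_ge0.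
have [kappa0 kappa00 kappa0P] := powR_inv_eventually_le _ _ s0 a0.
exists kappa0 => nu sigma sigma0 sigma1 [mnu [nu0 [nu1 _]]] [_ [m0 [m1 [b0 [b1 [mg0 mg1]]]]]].
move=> kappa _ kappa0k; have kappa_gt0 : 0 < kappa by exact: lt_le_trans kappa0k.
exists (2 * Q * (kappa^-1) `^ s).
  apply: (@le_lt_trans _ _ (2 * `|Q| * (2 * `|Q| + 2)^-1)).
    rewrite -[2 * Q * _]mulrA -[2 * `|Q| * _]mulrA ler_pM2l //.
    apply: (@le_trans _ _ (`|Q| * (kappa^-1) `^ s)).
      by rewrite ler_wpM2r ?powR_ge0 ?ler_norm.
    by rewrite ler_wpM2l ?kappa0P.
  by rewrite ltr_pdivrMr ?mul1r ?ltrDl // ltr_wpDl ?mulr_ge0.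
move=> E f L B _ fB LB w hw.
have B0 := le_trans (cabs_ge0 L) LB.
by apply: (cabs_T_op_le m0 m1 b0 b1 mg0 mg1).
Qed.
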